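(* Let $\theta$ and $\rho$ be regular infinite cardinals with $\theta < \rho < \kappa$, and let $K$ be a $\kappa$-complete ideal on $\kappa$ with $NS_\kappa|E^\kappa_\theta \subseteq K$. Then there are $c_\alpha \subseteq E^\kappa_{\geq\rho} \cap \alpha$ with $\sup c_\alpha = \alpha$, for $\alpha \in E^\kappa_\theta \cap acc(E^\kappa_{\geq\rho})$, such that $\{\alpha \in E^\kappa_\theta \cap acc(E^\kappa_{\geq\rho}) : c_\alpha \subseteq C\} \in K^+$ for every closed unbounded subset $C$ of $\kappa$.
   Context: $\kappa$ is a regular uncountable cardinal. An ideal on $\kappa$ is a nonempty $K \subseteq P(\kappa)$ with $\kappa \notin K$, every bounded subset of $\kappa$ in $K$, $K$ closed under subsets and under unions of two members; $K^+ = P(\kappa)\setminus K$; $\kappa$-complete means closed under unions of fewer than $\kappa$ members. For $A \subseteq \kappa$, $acc(A) = \{\alpha \in \kappa\setminus\{0\} : \sup(A\cap\alpha) = \alpha\}$. $E^\kappa_\theta = \{\alpha \in acc(\kappa) : \mathrm{cf}(\alpha) = \theta\}$, $E^\kappa_{\geq\rho} = \{\alpha \in acc(\kappa) : \mathrm{cf}(\alpha) \geq \rho\}$. $NS_\kappa|E^\kappa_\theta = \{B \subseteq \kappa : B \cap E^\kappa_\theta \text{ is nonstationary}\}$. *)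

(* kappa is represented as a type T equipped with a strict
   well-order lt (so T, ordered by lt, has order type kappa; elements of T
   are the ordinals below kappa). *)

Section WO.
Context {T : Type} (lt : T -> T -> Prop).

Definition strict_well_order : Prop :=
  (forall x y z, lt x y -> lt y z -> lt x z) /\
  (forall x y, lt x y \/ x = y \/ lt y x) /\
  well_founded lt.

Definition le (x y : T) : Prop := lt x y \/ x = y.

Definition seg (a : T) : T -> Prop := fun x => lt x a.

Definition subset (A B : T -> Prop) : Prop := forall x, A x -> B x.

Definition equinumerous (A B : T -> Prop) : Prop :=
  exists f : T -> T,
    (forall x, A x -> B (f x)) /\
    (forall x y, A x -> A y -> f x = f y -> x = y) /\
    (forall y, B y -> exists x, A x /\ f x = y).

Definition cofinal_in (X : T -> Prop) (a : T) : Prop :=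
  subset X (seg a) /\ forall b, lt b a -> exists g, X g /\ le b g.

Definition cof_eq (a g : T) : Prop :=
  (exists X, cofinal_in X a /\ equinumerous X (seg g)) /\
  (forall d, lt d g -> ~ exists X, cofinal_in X a /\ equinumerous X (seg d)).

Definition acc (A : T -> Prop) (a : T) : Prop :=
  (exists b, lt b a) /\
  forall b, lt b a -> exists g, A g /\ lt b g /\ lt g a.

Definition E_cf (th : T) (a : T) : Prop := acc (fun _ => True) a /\ cof_eq a th.

Definition E_cf_ge (rh : T) (a : T) : Prop :=
  acc (fun _ => True) a /\ exists g, cof_eq a g /\ ~ lt g rh.

Definition unbounded (X : T -> Prop) : Prop :=
  forall b, exists g, X g /\ le b g.

Definition bounded (X : T -> Prop) : Prop :=
  exists a, forall x, X x -> lt x a.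

Definition club (C : T -> Prop) : Prop :=
  unbounded C /\ forall a, acc C a -> C a.

Definition regular_uncountable_kappa : Prop :=
  (forall a, ~ exists f : T -> T,
       (forall x y, f x = f y -> x = y) /\ forall x, lt (f x) a) /\
  (forall X, unbounded X -> exists f : T -> T,
       (forall x y, f x = f y -> x = y) /\ forall x, X (f x)) /\
  (~ exists f : T -> nat, forall x y, f x = f y -> x = y).

Definition infinite_regular (th : T) : Prop :=
  (exists f : nat -> T, (forall m n, f m = f n -> m = n) /\ forall n, lt (f n) th) /\
  cof_eq th th.

Definition ideal (K : (T -> Prop) -> Prop) : Prop :=
  (exists B, K B) /\
  ~ K (fun _ => True) /\
  (forall B, bounded B -> K B) /\
  (forall A B, subset A B -> K B -> K A) /\
  (forall A B, K A -> K B -> K (fun x => A x \/ B x)).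

Definition kappa_complete (K : (T -> Prop) -> Prop) : Prop :=
  forall (a : T) (F : T -> T -> Prop),
    (forall b, lt b a -> K (F b)) ->
    K (fun x => exists b, lt b a /\ F b x).

Definition nonstationary (S : T -> Prop) : Prop :=
  exists C, club C /\ forall x, C x -> ~ S x.

Definition NS_restr_sub (th : T) (K : (T -> Prop) -> Prop) : Prop :=
  forall B, nonstationary (fun x => B x /\ E_cf th x) -> K B.

End WO.

From Stdlib Require Import Classical ClassicalEpsilon FunctionalExtensionality.

(** Fix for every [s] a cofinal subset [L s] of order type cf(s).  For a club [C], the
    ladder at [a] collects the endpoints of the walks from [a] through
    [Y = C ∩ E_{>=rh}]: from [x] go to the supremum of [Y] below [x], stop there if it
    lies in [Y], and otherwise (its cofinality is then below [rh]) branch into [L] of it.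
    If every ladder system failed, a failure club [D C] would witness it for each [C];
    iterate [C_i = ⋂_{j<i} D C_j] for [i <= rh].  As every branching has fewer than [rh]
    branches and [rh] is regular, the walks from a fixed [a] through [C_i ∩ E_{>=rh}]
    stabilise from some [i < rh] on, so at every [a ∈ E_th ∩ acc(C_rh ∩ E_{>=rh})] the
    ladder of some [C_i] lies in [C_{i+1} ⊆ D C_i].  By [kappa]-completeness these [a]
    form a set in [K], yet they fill [E_th] up to a club, contradicting
    [NS|E_th ⊆ K] and [kappa ∉ K]. *)

Section WellOrder.
Variables (T : Type) (lt : T -> T -> Prop).
Hypothesis Hwo : strict_well_order lt.

Lemma lt_trans x y z : lt x y -> lt y z -> lt x z.
Proof. apply (proj1 Hwo). Qed.

Lemma lt_trichotomy x y : lt x y \/ x = y \/ lt y x.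
Proof. apply (proj1 (proj2 Hwo)). Qed.

Lemma lt_wf : well_founded lt.
Proof. exact (proj2 (proj2 Hwo)). Qed.

Lemma lt_irrefl x : ~ lt x x.
Proof. induction (lt_wf x) as [x _ IH]. intro H. exact (IH x H H). Qed.

Lemma lt_asym x y : lt x y -> ~ lt y x.
Proof. intros H1 H2. exact (lt_irrefl x (lt_trans _ _ _ H1 H2)). Qed.

Lemma le_refl x : le lt x x.
Proof. now right. Qed.

Lemma lt_le_incl x y : lt x y -> le lt x y.
Proof. now left. Qed.

Lemma le_lt_trans x y z : le lt x y -> lt y z -> lt x z.
Proof. intros [H|<-] H2; [exact (lt_trans _ _ _ H H2) | exact H2]. Qed.

Lemma lt_le_trans x y z : lt x y -> le lt y z -> lt x z.
Proof. intros H [H2|<-]; [exact (lt_trans _ _ _ H H2) | exact H]. Qed.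

Lemma le_trans x y z : le lt x y -> le lt y z -> le lt x z.
Proof. intros [H|<-] H2; [left; exact (lt_le_trans _ _ _ H H2) | exact H2]. Qed.

Lemma not_lt_le x y : ~ lt x y -> le lt y x.
Proof.
  intro H. destruct (lt_trichotomy x y) as [h|[h|h]]; [contradiction | now right | now left].
Qed.

Lemma le_not_lt x y : le lt x y -> ~ lt y x.
Proof. intros [H|<-] H2; [exact (lt_asym _ _ H H2) | exact (lt_irrefl _ H2)]. Qed.

Lemma not_le_lt x y : ~ le lt x y -> lt y x.
Proof.
  intro H. destruct (lt_trichotomy x y) as [h|[h|h]]; [| |exact h]; exfalso; apply H.
  - now left.
  - now right.
Qed.

Lemma le_antisym x y : le lt x y -> le lt y x -> x = y.
Proof. intros [H|H] H2; [exfalso; exact (le_not_lt _ _ H2 H) | exact H]. Qed.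

Lemma le_max x y : exists m, le lt x m /\ le lt y m /\ (m = x \/ m = y).
Proof.
  destruct (lt_trichotomy x y) as [h|[<-|h]].
  - exists y. auto using lt_le_incl, le_refl.
  - exists x. auto using le_refl.
  - exists x. auto using lt_le_incl, le_refl.
Qed.

Lemma well_founded_min (P : T -> Prop) :
  (exists x, P x) -> exists x, P x /\ forall y, P y -> ~ lt y x.
Proof.
  intros [x Hx]. apply NNPP; intro Hn.
  enough (Hnone : forall z, ~ P z) by exact (Hnone x Hx).
  intro z. induction (lt_wf z) as [z _ IH]. intro Pz.
  apply Hn. exists z. split; [exact Pz|]. intros y Py Hy. exact (IH y Hy Py).
Qed.

Definition upper_bound (P : T -> Prop) (b : T) : Prop := forall x, P x -> le lt x b.

Definition is_lub (P : T -> Prop) (s : T) : Prop :=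
  upper_bound P s /\ forall t, upper_bound P t -> le lt s t.

Lemma lub_exists P b : upper_bound P b -> exists s, is_lub P s.
Proof.
  intro Hb. destruct (well_founded_min (upper_bound P) (ex_intro _ b Hb)) as [s [Hs Hmin]].
  exists s. split; [exact Hs|]. intros t Ht. apply not_lt_le. exact (Hmin t Ht).
Qed.

Lemma lub_unique P s s' : is_lub P s -> is_lub P s' -> s = s'.
Proof. intros [Hs Hmin] [Hs' Hmin']. apply le_antisym; auto. Qed.

Lemma lub_mono P Q s s' : subset P Q -> is_lub P s -> is_lub Q s' -> le lt s s'.
Proof. intros HPQ [_ Hmin] [Hs' _]. apply Hmin. intros x Hx. exact (Hs' x (HPQ x Hx)). Qed.

Lemma lub_approx P s t : is_lub P s -> lt t s -> exists y, P y /\ lt t y.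
Proof.
  intros [_ Hmin] Ht. apply NNPP; intro Hn. apply (le_not_lt s t); [|exact Ht].
  apply Hmin. intros y Hy. apply not_lt_le. intro Hty. apply Hn. now exists y.
Qed.

(** The transitive collapse of [Z].  The default [z] of [least] is never used: [z]
    itself is always fresh at [z]. *)
Section Collapse.
Variable Z : T -> Prop.

Definition least (d : T) (P : T -> Prop) : T :=
  epsilon (inhabits d) (fun x => P x /\ forall y, P y -> ~ lt y x).

Lemma least_spec d P : (exists x, P x) -> P (least d P) /\ forall y, P y -> ~ lt y (least d P).
Proof. intro H. exact (epsilon_spec _ _ (well_founded_min P H)). Qed.

Definition collapse : T -> T :=
  Fix lt_wf (fun _ => T)
    (fun z rec => least z (fun v => forall z' (H : lt z' z), Z z' -> rec z' H <> v)).

Definition fresh_at (z v : T) : Prop := forall z', lt z' z -> Z z' -> collapse z' <> v.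

Lemma collapse_eq z : collapse z = least z (fresh_at z).
Proof.
  unfold collapse at 1. rewrite Fix_eq; [reflexivity|].
  intros x f g Hfg. f_equal.
  apply functional_extensionality; intro v.
  now replace g with f by (do 2 (apply functional_extensionality_dep; intro); apply Hfg).
Qed.

Lemma collapse_spec z :
  fresh_at z (collapse z) /\ (forall v, fresh_at z v -> ~ lt v (collapse z)) /\
  le lt (collapse z) z.
Proof.
  induction (lt_wf z) as [z _ IH].
  assert (Hz : fresh_at z z).
  { intros z' Hz' _ E. destruct (IH z' Hz') as [_ [_ Hle]]. rewrite E in Hle.
    exact (le_not_lt _ _ Hle Hz'). }
  destruct (least_spec z (fresh_at z) (ex_intro _ z Hz)) as [Hfresh Hmin].
  rewrite collapse_eq. split; [exact Hfresh|]. split; [exact Hmin|].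
  apply not_lt_le. exact (Hmin z Hz).
Qed.

Lemma collapse_le z : le lt (collapse z) z.
Proof. apply collapse_spec. Qed.

Lemma collapse_inj z1 z2 : Z z1 -> Z z2 -> collapse z1 = collapse z2 -> z1 = z2.
Proof.
  intros H1 H2 E. destruct (lt_trichotomy z1 z2) as [h|[h|h]]; [exfalso| exact h |exfalso].
  - exact (proj1 (collapse_spec z2) z1 h H1 E).
  - exact (proj1 (collapse_spec z1) z2 h H2 (eq_sym E)).
Qed.

Lemma collapse_below z v : lt v (collapse z) -> exists z', lt z' z /\ Z z' /\ collapse z' = v.
Proof.
  intro H. apply NNPP; intro Hn. apply (proj1 (proj2 (collapse_spec z)) v); [|exact H].
  intros z' h1 h2 E. apply Hn. now exists z'.
Qed.

Lemma collapse_mono z1 z2 : Z z1 -> Z z2 -> lt z1 z2 -> lt (collapse z1) (collapse z2).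
Proof.
  intros H1 H2 h.
  destruct (lt_trichotomy (collapse z1) (collapse z2)) as [e|[e|e]]; [exact e|exfalso..].
  - rewrite (collapse_inj _ _ H1 H2 e) in h. exact (lt_irrefl _ h).
  - destruct (collapse_below _ _ e) as [z' [Hz' [HZ' E]]].
    rewrite (collapse_inj _ _ HZ' H2 E) in Hz'. exact (lt_asym _ _ Hz' h).
Qed.

End Collapse.

Definition enumerates (X : T -> Prop) (g : T) (h : T -> T) : Prop :=
  (forall x, X x -> lt (h x) g) /\
  (forall v, lt v g -> exists x, X x /\ h x = v) /\
  (forall x y, X x -> X y -> lt x y -> lt (h x) (h y)).

Lemma collapse_enumerates Z X z :
  Z z -> (forall x, X x <-> Z x /\ lt x z) -> enumerates X (collapse Z z) (collapse Z).
Proof.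
  intros Hz HX. split; [|split].
  - intros x Hx. apply HX in Hx. apply collapse_mono; tauto.
  - intros v Hv. destruct (collapse_below Z z v Hv) as [x [Hxz [HZx E]]].
    exists x. split; [apply HX; auto | exact E].
  - intros x y Hx Hy. apply HX in Hx, Hy. apply collapse_mono; tauto.
Qed.

Lemma enumerates_inj X g h x y : enumerates X g h -> X x -> X y -> h x = h y -> x = y.
Proof.
  intros [_ [_ Hmono]] Hx Hy E.
  destruct (lt_trichotomy x y) as [l|[l|l]]; [exfalso|exact l|exfalso].
  - pose proof (Hmono x y Hx Hy l) as H. rewrite E in H. exact (lt_irrefl _ H).
  - pose proof (Hmono y x Hy Hx l) as H. rewrite E in H. exact (lt_irrefl _ H).
Qed.

Lemma enumerates_reflect X g h x y : enumerates X g h -> X x -> X y -> lt (h x) (h y) -> lt x y.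
Proof.
  intros He Hx Hy Hlt. apply not_le_lt. intros [l| <-].
  - exact (lt_asym _ _ Hlt (proj2 (proj2 He) y x Hy Hx l)).
  - exact (lt_irrefl _ Hlt).
Qed.

Lemma enumerates_equinumerous X g h : enumerates X g h -> equinumerous X (seg lt g).
Proof.
  intro He. exists h. split; [|split].
  - apply He.
  - intros x y Hx Hy. exact (enumerates_inj X g h x y He Hx Hy).
  - apply He.
Qed.

(** A set bounded by [g] is the part below [g] of [Z \/ {g}], whose collapse maps
    [g] to at most [g]. *)
Lemma bounded_equinumerous_seg Z g :
  (forall z, Z z -> lt z g) -> exists e, le lt e g /\ equinumerous Z (seg lt e).
Proof.
  intro HZ. set (Z' := fun x => Z x \/ x = g).
  exists (collapse Z' g). split; [apply collapse_le|].
  apply (enumerates_equinumerous _ _ (collapse Z')), collapse_enumerates; [now right|].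
  intro x. split; [intro Hx; split; [now left | auto] |].
  intros [[Hx| ->] Hlt]; [exact Hx | exfalso; exact (lt_irrefl _ Hlt)].
Qed.

Lemma injective_equinumerous_seg (A : T -> Prop) (k : T -> T) g :
  (forall x, A x -> lt (k x) g) -> (forall x y, A x -> A y -> k x = k y -> x = y) ->
  exists e, le lt e g /\ equinumerous A (seg lt e).
Proof.
  intros Hk Hinj.
  destruct (bounded_equinumerous_seg (fun z => exists x, A x /\ k x = z) g)
    as [e [Heg [f [F1 [F2 F3]]]]].
  { intros z [x [Hx <-]]. auto. }
  exists e. split; [exact Heg|]. exists (fun x => f (k x)). split; [|split].
  - intros x Hx. apply F1. now exists x.
  - intros x y Hx Hy E. apply Hinj; auto. apply F2; [now exists x | now exists y | exact E].
  - intros y Hy. destruct (F3 y Hy) as [z [[x [Hx <-]] E]]. now exists x.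
Qed.

Lemma cof_exists s : exists g, cof_eq lt s g.
Proof.
  set (P := fun g => exists X, cofinal_in lt X s /\ equinumerous X (seg lt g)).
  assert (Ps : P s).
  { exists (seg lt s). split.
    - split; [intros x Hx; exact Hx|]. intros b Hb. exists b. split; [exact Hb | apply le_refl].
    - exists (fun x => x). split; [|split]; auto. intros y Hy. now exists y. }
  destruct (well_founded_min P (ex_intro _ s Ps)) as [g [Pg Hg]].
  exists g. split; [exact Pg|]. intros d Hd HPd. exact (Hg d HPd Hd).
Qed.

Lemma cof_unique a g1 g2 : cof_eq lt a g1 -> cof_eq lt a g2 -> g1 = g2.
Proof.
  intros [A1 B1] [A2 B2]. destruct (lt_trichotomy g1 g2) as [h|[h|h]]; [exfalso|exact h|exfalso].
  - exact (B2 g1 h A1).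
  - exact (B1 g2 h A2).
Qed.

Section Walks.
Variable L : T -> T -> Prop.
Hypothesis HL : forall s, cofinal_in lt (L s) s.

Definition sup_below (Y : T -> Prop) (x : T) : T -> Prop := is_lub (fun y => Y y /\ le lt y x).

Lemma sup_below_exists Y x : exists s, sup_below Y x s.
Proof. apply (lub_exists _ x). intros y [_ Hy]. exact Hy. Qed.

Lemma sup_below_le Y x s : sup_below Y x s -> le lt s x.
Proof. intro Hs. apply (proj2 Hs). intros y [_ Hy]. exact Hy. Qed.

Lemma sup_below_acc Y x s : sup_below Y x s -> ~ Y s -> (exists t, lt t s) -> acc lt Y s.
Proof.
  intros Hs Ys Hpos. split; [exact Hpos|]. intros t Ht.
  destruct (lub_approx _ _ _ Hs Ht) as [y [[Yy Hyx] Hty]]. exists y.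
  split; [exact Yy|]. split; [exact Hty|].
  destruct (proj1 Hs y (conj Yy Hyx)) as [h| <-]; [exact h | contradiction].
Qed.

Lemma acc_sup_below Y a : acc lt Y a -> sup_below Y a a.
Proof.
  intro Ha. split; [intros y [_ Hy]; exact Hy|]. intros t Ht. apply not_lt_le. intro Hta.
  destruct (proj2 Ha t Hta) as [y [Yy [Hty Hya]]].
  exact (le_not_lt _ _ (Ht y (conj Yy (lt_le_incl _ _ Hya))) Hty).
Qed.

Inductive walk (Y : T -> Prop) : T -> T -> Prop :=
  | walk_stop x s : sup_below Y x s -> Y s -> walk Y x s
  | walk_step x s y g : sup_below Y x s -> ~ Y s -> L s y -> walk Y y g -> walk Y x g.

Lemma walk_sound Y x g : walk Y x g -> Y g /\ le lt g x.
Proof.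
  induction 1 as [x s Hs Ys | x s y g Hs _ Ly _ [Yg Hgy]].
  - split; [exact Ys | exact (sup_below_le _ _ _ Hs)].
  - split; [exact Yg|]. left. apply (le_lt_trans _ _ _ Hgy).
    exact (lt_le_trans _ _ _ (proj1 (HL s) y Ly) (sup_below_le _ _ _ Hs)).
Qed.

Lemma walk_cofinal Y x s : sup_below Y x s -> forall t, lt t s -> exists g, walk Y x g /\ lt t g.
Proof.
  revert s. induction (lt_wf x) as [x _ IH]. intros s Hs t Ht.
  destruct (classic (Y s)) as [Ys|Ys]; [exists s; split; [apply walk_stop|]; assumption|].
  destruct (lub_approx _ _ _ Hs Ht) as [y' [[Yy' Hy'x] Hty']].
  assert (Hy's : lt y' s).
  { destruct (proj1 Hs y' (conj Yy' Hy'x)) as [h| <-]; [exact h | contradiction]. }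
  destruct (proj2 (HL s) y' Hy's) as [y [Ly Hy'y]].
  destruct (sup_below_exists Y y) as [sy Hsy].
  assert (Hyx : lt y x) by exact (lt_le_trans _ _ _ (proj1 (HL s) y Ly) (sup_below_le _ _ _ Hs)).
  destruct (IH y Hyx sy Hsy t) as [g [Hg Htg]].
  { apply (lt_le_trans _ _ _ Hty'). apply (proj1 Hsy). split; assumption. }
  exists g. split; [exact (walk_step Y x s y g Hs Ys Ly Hg) | exact Htg].
Qed.

Lemma walk_stop_iff Y x s g : sup_below Y x s -> Y s -> (walk Y x g <-> g = s).
Proof.
  intros Hs Ys. split; [|intros ->; exact (walk_stop Y x s Hs Ys)].
  intro H. inversion H as [? s' Hs' | ? s' ? ? Hs' Ys']; subst.
  - exact (lub_unique _ _ _ Hs' Hs).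
  - rewrite (lub_unique _ _ _ Hs' Hs) in Ys'. contradiction.
Qed.

Lemma walk_step_iff Y x s g : sup_below Y x s -> ~ Y s ->
  (walk Y x g <-> exists y, L s y /\ walk Y y g).
Proof.
  intros Hs Ys. split; [|intros [y [Ly Hy]]; exact (walk_step Y x s y g Hs Ys Ly Hy)].
  intro H. inversion H as [? s' Hs' Ys' | ? s' y ? Hs' _ Ly Hy]; subst.
  - rewrite (lub_unique _ _ _ Hs' Hs) in Ys'. contradiction.
  - rewrite (lub_unique _ _ _ Hs' Hs) in Ly. now exists y.
Qed.

End Walks.

Section RegularKappa.
Hypothesis Hkappa : regular_uncountable_kappa lt.

Lemma image_bounded (I : Type) (D : I -> Prop) (f : I -> T) :
  (~ exists p : T -> I, (forall x y, p x = p y -> x = y) /\ forall x, D (p x)) ->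
  exists b, forall j, D j -> lt (f j) b.
Proof.
  intro Hsmall. apply NNPP; intro Hn.
  assert (Hunb : unbounded lt (fun w => exists j, D j /\ f j = w)).
  { intro b. apply NNPP; intro Hb. apply Hn. exists b. intros j Hj. apply not_le_lt.
    intro Hle. apply Hb. exists (f j). eauto. }
  destruct (proj1 (proj2 Hkappa) _ Hunb) as [u [Hu_inj Hu]].
  destruct (choice (fun x j => D j /\ f j = u x)) as [p Hp].
  { intro x. destruct (Hu x) as [j Hj]. now exists j. }
  apply Hsmall. exists p. split; [|intro x; apply Hp].
  intros x y E. apply Hu_inj. rewrite <- (proj2 (Hp x)), <- (proj2 (Hp y)), E. reflexivity.
Qed.

Lemma seg_image_bounded i (f : T -> T) : exists b, forall j, lt j i -> lt (f j) b.
Proof. apply (image_bounded T (seg lt i)). exact (proj1 Hkappa i). Qed.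

Lemma nat_image_bounded (f : nat -> T) : exists b, forall n, lt (f n) b.
Proof.
  destruct (image_bounded nat (fun _ => True) f) as [b Hb].
  - intros [p [Hp _]]. apply (proj2 (proj2 Hkappa)). now exists p.
  - exists b. auto.
Qed.

Lemma exists_gt b : exists c, lt b c.
Proof. destruct (nat_image_bounded (fun _ => b)) as [c Hc]. exists c. exact (Hc O). Qed.

(** [s] is the supremum of an [omega]-chain [b < b1 < b2 < ...] in which each term
    bounds the images of the previous one. *)
Lemma closure_point i (N : T -> T -> T) b :
  exists s, lt b s /\ forall j, lt j i -> forall t, lt t s -> exists y, lt t y /\ lt (N j y) s.
Proof.
  destruct (choice (fun y c => lt y c /\ forall j, lt j i -> lt (N j y) c)) as [next Hnext].
  { intro y. destruct (seg_image_bounded i (fun j => N j y)) as [b0 Hb0].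
    destruct (exists_gt y) as [c Hc]. destruct (le_max b0 c) as [m [Hb0m [Hcm _]]].
    exists m. split; [exact (lt_le_trans _ _ _ Hc Hcm)|].
    intros j Hj. exact (lt_le_trans _ _ _ (Hb0 j Hj) Hb0m). }
  set (chain := fix chain (n : nat) : T := match n with O => b | S n => next (chain n) end).
  destruct (nat_image_bounded chain) as [B HB].
  destruct (lub_exists (fun x => exists n, chain n = x) B) as [s Hs].
  { intros x [n <-]. now left. }
  assert (Hchain : forall n, lt (chain n) s).
  { intro n. apply (lt_le_trans _ (chain (S n))); [apply Hnext|].
    apply (proj1 Hs). now exists (S n). }
  exists s. split; [exact (Hchain O)|]. intros j Hj t Ht.
  destruct (lub_approx _ _ _ Hs Ht) as [y [[n <-] Hty]].
  exists (chain n). split; [exact Hty|].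
  apply (lt_trans _ (chain (S n))); [apply Hnext; exact Hj | exact (Hchain (S n))].
Qed.

Lemma acc_mono (A B : T -> Prop) a : subset A B -> acc lt A a -> acc lt B a.
Proof.
  intros H [Ha Hcof]. split; [exact Ha|]. intros b Hb.
  destruct (Hcof b Hb) as [g [Hg Hbg]]. exists g. auto.
Qed.

Lemma acc_acc (X : T -> Prop) a : acc lt (acc lt X) a -> acc lt X a.
Proof.
  intros [Ha Hcof]. split; [exact Ha|]. intros b Hb.
  destruct (Hcof b Hb) as [g [[_ Hg] [Hbg Hga]]].
  destruct (Hg b Hbg) as [x [Hx [Hbx Hxg]]].
  exists x. split; [exact Hx|]. split; [exact Hbx | exact (lt_trans _ _ _ Hxg Hga)].
Qed.

Lemma club_full : club lt (fun _ => True).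
Proof. split; [intro b; exists b; split; [exact I | apply le_refl] | auto]. Qed.

Lemma club_seg_inter i (F : T -> T -> Prop) :
  (forall j, lt j i -> club lt (F j)) -> club lt (fun x => forall j, lt j i -> F j x).
Proof.
  intro HF. split.
  - intro b.
    destruct (choice (fun (p : T * T) z => (lt (fst p) i -> F (fst p) z) /\ le lt (snd p) z))
      as [N HN].
    { intros [j y]. simpl. destruct (classic (lt j i)) as [h|h].
      - destruct (proj1 (HF j h) y) as [z Hz]. now exists z.
      - exists y. split; [contradiction | apply le_refl]. }
    destruct (closure_point i (fun j y => N (j, y)) b) as [s [Hbs Hs]].
    exists s. split; [|now left]. intros j Hj. apply (proj2 (HF j Hj)). split; [now exists b|].
    intros t Ht. destruct (Hs j Hj t Ht) as [y [Hty Hys]].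
    exists (N (j, y)). split; [apply (HN (j, y)); exact Hj|].
    split; [exact (lt_le_trans _ _ _ Hty (proj2 (HN (j, y)))) | exact Hys].
  - intros a Ha j Hj. apply (proj2 (HF j Hj)). revert Ha. apply acc_mono. intros x Hx. auto.
Qed.

Lemma acc_club (X : T -> Prop) : unbounded lt X -> club lt (acc lt X).
Proof.
  intro HX. split.
  - intro b. destruct (choice (fun y z => X z /\ le lt y z) HX) as [N HN].
    destruct (exists_gt b) as [i Hi].
    (* [N] as a family indexed by [seg i], which contains [b] *)
    destruct (closure_point i (fun _ y => N y) b) as [s [Hbs Hs]].
    exists s. split; [|now left]. split; [now exists b|].
    intros t Ht. destruct (Hs b Hi t Ht) as [y [Hty Hys]].
    exists (N y). split; [apply HN|].
    split; [exact (lt_le_trans _ _ _ Hty (proj2 (HN y))) | exact Hys].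
  - intros a Ha. apply acc_acc, Ha.
Qed.

Lemma ideal_club_positive th K (S B : T -> Prop) : ideal lt K -> NS_restr_sub lt th K ->
  club lt S -> (forall a, E_cf lt th a -> S a -> B a) -> ~ K B.
Proof.
  intros [_ [Ktop [_ [Ksub Kunion]]]] HNS HS HB HKB.
  assert (Hout : K (fun x => ~ E_cf lt th x)).
  { apply HNS. exists (fun _ => True). split; [exact club_full|].
    intros x _ [Hx Hx']. contradiction. }
  assert (Hgap : K (fun x => E_cf lt th x /\ ~ S x)).
  { apply HNS. exists S. split; [exact HS|]. intros x Hx [[_ Hx'] _]. contradiction. }
  apply Ktop. refine (Ksub _ _ _ (Kunion _ _ (Kunion _ _ HKB Hout) Hgap)). intros x _.
  destruct (classic (E_cf lt th x)) as [Hx|Hx]; [|left; right; exact Hx].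
  destruct (classic (S x)) as [HSx|HSx]; [left; left; exact (HB x Hx HSx) | right; now split].
Qed.

Section ClubChain.
Variable D : (T -> Prop) -> (T -> Prop).

Definition club_chain : T -> T -> Prop :=
  Fix lt_wf (fun _ => T -> Prop) (fun i rec x => forall j (H : lt j i), D (rec j H) x).

Lemma club_chain_eq i : club_chain i = fun x => forall j, lt j i -> D (club_chain j) x.
Proof.
  unfold club_chain at 1. rewrite Fix_eq; [reflexivity|].
  intros x f g Hfg.
  now replace g with f by (do 2 (apply functional_extensionality_dep; intro); apply Hfg).
Qed.

Lemma club_chain_step i j x : lt j i -> club_chain i x -> D (club_chain j) x.
Proof. intros Hji Hx. rewrite club_chain_eq in Hx. exact (Hx j Hji). Qed.

Lemma club_chain_decr i j : le lt j i -> subset (club_chain i) (club_chain j).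
Proof.
  intros [Hji| ->] x Hx; [|exact Hx]. rewrite club_chain_eq in Hx |- *.
  intros j' Hj'. exact (Hx j' (lt_trans _ _ _ Hj' Hji)).
Qed.

Lemma club_chain_club i : (forall C, club lt (D C)) -> club lt (club_chain i).
Proof. intro HD. rewrite club_chain_eq. apply club_seg_inter. intros j _. apply HD. Qed.

End ClubChain.

Section RegularCardinal.
Variable rh : T.
Hypothesis Hrh : infinite_regular lt rh.

Lemma regular_nonzero : exists j, lt j rh.
Proof. destruct Hrh as [[f [_ Hf]] _]. exists (f O). exact (Hf O). Qed.

Lemma regular_cofinal_large (W : T -> Prop) (k : T -> T) g :
  cofinal_in lt W rh -> lt g rh -> (forall x, W x -> lt (k x) g) ->
  ~ (forall x y, W x -> W y -> k x = k y -> x = y).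
Proof.
  intros HW Hg Hk Hinj.
  destruct (injective_equinumerous_seg W k g Hk Hinj) as [e [Heg HWe]].
  apply (proj2 (proj2 Hrh) e (le_lt_trans _ _ _ Heg Hg)). now exists W.
Qed.

Lemma regular_bound (X : T -> Prop) g (f : T -> T) :
  equinumerous X (seg lt g) -> lt g rh -> (forall x, X x -> lt (f x) rh) ->
  exists b, lt b rh /\ forall x, X x -> le lt (f x) b.
Proof.
  intros [k [Hk [Hinj _]]] Hg Hf. apply NNPP; intro Hn.
  set (W := fun w => exists x, X x /\ f x = w).
  destruct (choice (fun w x => W w -> X x /\ f x = w)) as [pre Hpre].
  { intro w. destruct (classic (W w)) as [[x Hx]|Hw]; [now exists x | exists w; contradiction]. }
  apply (regular_cofinal_large W (fun w => k (pre w)) g); [split| exact Hg | ..].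
  - intros w [x [Hx <-]]. exact (Hf x Hx).
  - intros b Hb. apply NNPP; intro Hnb. apply Hn. exists b. split; [exact Hb|].
    intros x Hx. apply not_lt_le. intro Hlt. apply Hnb.
    exists (f x). split; [now exists x | now left].
  - intros w Hw. apply Hk, Hpre, Hw.
  - intros w w' Hw Hw' E. apply Hinj in E; [| apply Hpre; assumption ..].
    rewrite <- (proj2 (Hpre w Hw)), <- (proj2 (Hpre w' Hw')), E. reflexivity.
Qed.

Lemma regular_limit v : lt v rh -> exists w, lt v w /\ lt w rh.
Proof.
  intro Hv. apply NNPP; intro Hn.
  assert (Htwo : exists a b, lt a b /\ lt b rh).
  { destruct Hrh as [[f [Hinj Hf]] _].
    destruct (lt_trichotomy (f O) (f (S O))) as [h|[h|h]].
    - exists (f O), (f (S O)). auto.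
    - discriminate (Hinj _ _ h).
    - exists (f (S O)), (f O). auto. }
  destruct Htwo as [a [b [Hab Hb]]].
  apply (regular_cofinal_large (fun x => x = v) (fun _ => a) b);
    [split | exact Hb | auto | congruence].
  - intros x ->. exact Hv.
  - intros b' Hb'. exists v. split; [reflexivity|].
    apply not_lt_le. intro h. apply Hn. now exists b'.
Qed.

(** Were [cf s < rh], the enumeration indices of points of [X] above a cofinal subset
    of [s] of that size would be bounded below [rh], by regularity. *)
Lemma lub_of_regular_type X h s :
  enumerates X rh h -> is_lub X s -> acc lt X s /\ E_cf_ge lt rh s.
Proof.
  intros He Hs.
  assert (Hbelow : forall x, X x -> lt x s).
  { intros x Hx. destruct (regular_limit (h x) (proj1 He x Hx)) as [w [Hxw Hw]].
    destruct (proj1 (proj2 He) w Hw) as [x' [Hx' <-]].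
    exact (lt_le_trans _ _ _ (enumerates_reflect _ _ _ _ _ He Hx Hx' Hxw) (proj1 Hs x' Hx')). }
  assert (HaccX : acc lt X s).
  { split.
    - destruct regular_nonzero as [j Hj]. destruct (proj1 (proj2 He) j Hj) as [x [Hx _]].
      exists x. exact (Hbelow x Hx).
    - intros t Ht. destruct (lub_approx _ _ _ Hs Ht) as [x [Hx Htx]]. exists x. auto. }
  split; [exact HaccX|]. split; [revert HaccX; apply acc_mono; now intros|].
  destruct (cof_exists s) as [g Hg]. exists g. split; [exact Hg|]. intro Hgrh.
  destruct Hg as [[X' [[HX's HX'cof] HX']] _].
  destruct (choice (fun x' y => lt x' s -> X y /\ lt x' y)) as [above Habove].
  { intro x'. destruct (classic (lt x' s)) as [h'|h'].
    - destruct (lub_approx _ _ _ Hs h') as [y Hy]. now exists y.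
    - exists x'. contradiction. }
  destruct (regular_bound X' g (fun x' => h (above x')) HX' Hgrh) as [beta [Hbeta Hb]].
  { intros x' Hx'. apply He, Habove, HX's, Hx'. }
  destruct (regular_limit beta Hbeta) as [w [Hbw Hw]].
  destruct (proj1 (proj2 He) w Hw) as [xw [Hxw <-]].
  destruct (HX'cof xw (Hbelow xw Hxw)) as [x' [Hx' Hxwx']].
  destruct (Habove x' (HX's x' Hx')) as [Hy Hx'y].
  apply (lt_irrefl (h xw)). apply (lt_trans _ beta); [|exact Hbw].
  apply (lt_le_trans _ (h (above x'))); [|exact (Hb x' Hx')]. apply (proj2 (proj2 He) _ _ Hxw Hy).
  exact (le_lt_trans _ _ _ Hxwx' Hx'y).
Qed.

Lemma unbounded_regular_type_part Z : unbounded lt Z ->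
  exists z, Z z /\ enumerates (fun x => Z x /\ lt x z) rh (collapse Z).
Proof.
  intro HZ.
  assert (Hhit : exists z, Z z /\ collapse Z z = rh).
  { apply NNPP; intro Hn.
    assert (Hbelow : forall z, Z z -> lt (collapse Z z) rh).
    { intros z Hz. destruct (lt_trichotomy (collapse Z z) rh) as [h|[h|h]];
        [exact h | exfalso; apply Hn; now exists z | exfalso].
      destruct (collapse_below Z z rh h) as [z' [_ [Hz' E]]]. apply Hn. now exists z'. }
    destruct (proj1 (proj2 Hkappa) Z HZ) as [u [Hu_inj Hu]].
    apply (proj1 Hkappa rh). exists (fun x => collapse Z (u x)). split.
    - intros x y E. apply Hu_inj. exact (collapse_inj Z _ _ (Hu x) (Hu y) E).
    - intro x. exact (Hbelow _ (Hu x)). }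
  destruct Hhit as [z [Hz <-]]. exists z. split; [exact Hz|].
  apply collapse_enumerates; [exact Hz | tauto].
Qed.

Lemma club_cof_ge_unbounded C : club lt C -> unbounded lt (fun x => C x /\ E_cf_ge lt rh x).
Proof.
  intros [HCunb HCclosed] b.
  set (Z := fun z => C z /\ lt b z).
  assert (HZ : unbounded lt Z).
  { intro b'. destruct (exists_gt b) as [c Hc]. destruct (le_max b' c) as [m [Hb'm [Hcm _]]].
    destruct (HCunb m) as [z [Hz Hmz]]. exists z.
    split; [split; [exact Hz|] | exact (le_trans _ _ _ Hb'm Hmz)].
    exact (lt_le_trans _ _ _ Hc (le_trans _ _ _ Hcm Hmz)). }
  destruct (unbounded_regular_type_part Z HZ) as [z [Hz He]].
  destruct (lub_exists (fun x => Z x /\ lt x z) z) as [s Hs]. { intros x [_ Hx]. now left. }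
  destruct (lub_of_regular_type _ _ _ He Hs) as [Hacc Hcof].
  exists s. split; [split; [|exact Hcof]|].
  - apply HCclosed. revert Hacc. apply acc_mono. intros x [[Hx _] _]. exact Hx.
  - destruct Hacc as [[t Ht] Hcofin]. destruct (Hcofin t Ht) as [x [[[_ Hbx] _] [_ Hxs]]].
    left. exact (lt_trans _ _ _ Hbx Hxs).
Qed.

Section Stabilization.
Variable L : T -> T -> Prop.
Hypothesis HL : forall s, cofinal_in lt (L s) s.
Variable Y : T -> T -> Prop.
Hypothesis Y_decr : forall i j, le lt i j -> subset (Y j) (Y i).
Hypothesis Y_small_gaps : forall i s, acc lt (Y i) s -> ~ Y i s ->
  exists g, lt g rh /\ equinumerous (L s) (seg lt g).

Definition stable_from (x i0 : T) : Prop :=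
  lt i0 rh /\ forall i, le lt i0 i -> lt i rh -> forall g, walk L (Y i) x g <-> walk L (Y i0) x g.

Lemma sup_below_eventually_constant x :
  exists i1 m, lt i1 rh /\ forall i, le lt i1 i -> lt i rh -> sup_below (Y i) x m.
Proof.
  destruct (choice (fun i s => sup_below (Y i) x s) (fun i => sup_below_exists (Y i) x))
    as [sup Hsup].
  destruct regular_nonzero as [j0 Hj0].
  destruct (well_founded_min (fun v => exists i, lt i rh /\ sup i = v)) as [m [[i1 [Hi1 <-]] Hmin]].
  { exists (sup j0), j0. now split. }
  exists i1, (sup i1). split; [exact Hi1|]. intros i Hi1i Hi.
  replace (sup i1) with (sup i); [apply Hsup|]. apply le_antisym.
  - apply (lub_mono _ _ _ _ (fun y Hy => conj (Y_decr i1 i Hi1i y (proj1 Hy)) (proj2 Hy))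
             (Hsup i) (Hsup i1)).
  - apply not_lt_le. apply Hmin. now exists i.
Qed.

Lemma gap_bounded i x m (f : T -> T) : lt i rh -> sup_below (Y i) x m -> ~ Y i m ->
  (forall y, L m y -> lt (f y) rh) -> exists b, lt b rh /\ forall y, L m y -> le lt (f y) b.
Proof.
  intros Hi Hm Ym Hf. destruct (classic (exists t, lt t m)) as [Hpos|Hzero].
  - destruct (Y_small_gaps i m (sup_below_acc _ _ _ Hm Ym Hpos) Ym) as [g [Hg HLg]].
    exact (regular_bound (L m) g f HLg Hg Hf).
  - exists i. split; [exact Hi|]. intros y Hy. exfalso.
    apply Hzero. exists y. exact (proj1 (HL m) y Hy).
Qed.

(** Induction on [x]: once the supremum [m] of [Y i] below [x] has settled, either [m]
    stays in [Y i] and the walks stop at [m], or it leaves [Y i] and the walks continue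
    through the [< rh] points of [L m], whose stabilization indices are bounded. *)
Lemma walk_stabilizes x : exists i0, stable_from x i0.
Proof.
  induction (lt_wf x) as [x _ IH].
  destruct (sup_below_eventually_constant x) as [i1 [m [Hi1 Hm]]].
  destruct (classic (forall i, le lt i1 i -> lt i rh -> Y i m)) as [Hin|Hout].
  { exists i1. split; [exact Hi1|]. intros i Hi1i Hi g.
    rewrite (walk_stop_iff L _ _ _ g (Hm i Hi1i Hi) (Hin i Hi1i Hi)).
    rewrite (walk_stop_iff L _ _ _ g (Hm i1 (le_refl _) Hi1) (Hin i1 (le_refl _) Hi1)).
    reflexivity. }
  assert (exists i2, le lt i1 i2 /\ lt i2 rh /\ ~ Y i2 m) as [i2 [Hi12 [Hi2 Hm2]]].
  { apply NNPP; intro Hn. apply Hout. intros i Hi1i Hi. apply NNPP; intro Hm'. apply Hn. eauto. }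
  assert (Hstep : forall i g, le lt i2 i -> lt i rh ->
            (walk L (Y i) x g <-> exists y, L m y /\ walk L (Y i) y g)).
  { intros i g Hi2i Hi. apply walk_step_iff.
    - exact (Hm i (le_trans _ _ _ Hi12 Hi2i) Hi).
    - intro Ym. exact (Hm2 (Y_decr i2 i Hi2i m Ym)). }
  destruct (choice (fun y i => L m y -> stable_from y i)) as [iy Hiy].
  { intro y. destruct (classic (L m y)) as [Hy|Hy]; [|exists i2; contradiction].
    destruct (IH y) as [i Hi]; [|exists i; auto].
    exact (lt_le_trans _ _ _ (proj1 (HL m) y Hy) (sup_below_le _ _ _ (Hm i1 (le_refl _) Hi1))). }
  destruct (gap_bounded i2 x m iy Hi2 (Hm i2 Hi12 Hi2) Hm2) as [b [Hb Hiyb]].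
  { intros y Hy. apply Hiy, Hy. }
  destruct (le_max i2 b) as [i0 [Hi20 [Hb0 Hi0]]].
  assert (Hi0rh : lt i0 rh) by (destruct Hi0 as [-> | ->]; assumption).
  assert (Hlate : forall i g, le lt i0 i -> lt i rh ->
            (walk L (Y i) x g <-> exists y, L m y /\ walk L (Y (iy y)) y g)).
  { intros i g Hi0i Hi. rewrite (Hstep i g (le_trans _ _ _ Hi20 Hi0i) Hi).
    split; intros [y [Hy Hwalk]]; exists y; split; [exact Hy | | exact Hy |];
      revert Hwalk; apply (proj2 (Hiy y Hy) i); auto;
      exact (le_trans _ _ _ (Hiyb y Hy) (le_trans _ _ _ Hb0 Hi0i)). }
  exists i0. split; [exact Hi0rh|]. intros i Hi0i Hi g.
  rewrite (Hlate i g Hi0i Hi), (Hlate i0 g (le_refl _) Hi0rh). reflexivity.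
Qed.

End Stabilization.

Section Ladders.
Variable th : T.
Hypothesis Hthrh : lt th rh.

Definition cof_ge_part (C : T -> Prop) (x : T) : Prop := C x /\ E_cf_ge lt rh x.

Lemma E_cf_not_E_cf_ge a : E_cf lt th a -> ~ E_cf_ge lt rh a.
Proof.
  intros [_ Hth] [_ [g [Hg Hgrh]]]. apply Hgrh. rewrite <- (cof_unique a th g Hth Hg). exact Hthrh.
Qed.

(** Only the first clause matters; the second keeps [ladder L C a] cofinal in [a]
    when [C] is thin below [a]. *)
Definition ladder (L : T -> T -> Prop) (C : T -> Prop) (a g : T) : Prop :=
  (acc lt (cof_ge_part C) a /\ walk L (cof_ge_part C) a g) \/
  (~ acc lt (cof_ge_part C) a /\ E_cf_ge lt rh g /\ lt g a).

Lemma ladder_cofinal L C a : (forall s, cofinal_in lt (L s) s) ->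
  E_cf lt th a -> acc lt (E_cf_ge lt rh) a ->
  subset (ladder L C a) (fun g => E_cf_ge lt rh g /\ lt g a) /\
  (forall b, lt b a -> exists g, ladder L C a g /\ le lt b g).
Proof.
  intros HL Ha Hacc. destruct (classic (acc lt (cof_ge_part C) a)) as [HY|HY].
  - split.
    + intros g [[_ Hg]|[Hn _]]; [|contradiction].
      destruct (walk_sound L HL _ _ _ Hg) as [[_ Hcof] [Hga| ->]]; [now split|].
      exfalso. exact (E_cf_not_E_cf_ge a Ha Hcof).
    + intros b Hb. destruct (walk_cofinal L HL _ _ _ (acc_sup_below _ _ HY) b Hb) as [g [Hg Hbg]].
      exists g. split; [now left | now left].
  - split.
    + intros g [[Hn _]|[_ Hg]]; [contradiction | exact Hg].
    + intros b Hb. destruct (proj2 Hacc b Hb) as [g [Hg [Hbg Hga]]].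
      exists g. split; [right; auto | now left].
Qed.

Section FailureChain.
Variable L : T -> T -> Prop.
Hypothesis HL : forall s, cofinal_in lt (L s) s /\
  exists g, cof_eq lt s g /\ equinumerous (L s) (seg lt g).
Variable D : (T -> Prop) -> (T -> Prop).
Hypothesis D_club : forall C, club lt (D C).

Lemma chain_small_gaps i s : acc lt (cof_ge_part (club_chain D i)) s ->
  ~ cof_ge_part (club_chain D i) s -> exists g, lt g rh /\ equinumerous (L s) (seg lt g).
Proof.
  intros Hacc Hs. destruct (proj2 (HL s)) as [g [Hg HLg]]. exists g. split; [|exact HLg].
  apply NNPP; intro Hgrh. apply Hs. split.
  - apply (proj2 (club_chain_club D i D_club)). revert Hacc. apply acc_mono. now intros x [Hx _].
  - split; [revert Hacc; apply acc_mono; now intros| now exists g].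
Qed.

Lemma ladder_eventually_in_failure_club a :
  E_cf lt th a -> acc lt (cof_ge_part (club_chain D rh)) a ->
  exists i, lt i rh /\ subset (ladder L (club_chain D i) a) (D (club_chain D i)).
Proof.
  intros Ha Hacc.
  destruct (walk_stabilizes L (fun s => proj1 (HL s)) (fun i => cof_ge_part (club_chain D i)))
    with (x := a) as [i [Hi Hstable]].
  - intros i j Hij x [Hx Hcof]. split; [exact (club_chain_decr D j i Hij x Hx) | exact Hcof].
  - exact chain_small_gaps.
  - destruct (regular_limit i Hi) as [j [Hij Hj]].
    assert (Hacc_i : acc lt (cof_ge_part (club_chain D i)) a).
    { revert Hacc. apply acc_mono. intros x [Hx Hcof].
      split; [exact (club_chain_decr D rh i (lt_le_incl _ _ Hi) x Hx) | exact Hcof]. }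
    exists i. split; [exact Hi|]. intros g [[_ Hg]|[Hn _]]; [|contradiction].
    apply (Hstable j (lt_le_incl _ _ Hij) Hj) in Hg.
    apply (club_chain_step D j i g Hij). apply (walk_sound L (fun s => proj1 (HL s)) _ _ _ Hg).
Qed.

End FailureChain.

Variable K : (T -> Prop) -> Prop.
Hypothesis HK : ideal lt K.
Hypothesis HKc : kappa_complete lt K.
Hypothesis HNS : NS_restr_sub lt th K.

Lemma ladder_system_exists :
  exists c : T -> T -> Prop,
    (forall a, E_cf lt th a -> acc lt (E_cf_ge lt rh) a ->
       subset (c a) (fun g => E_cf_ge lt rh g /\ lt g a) /\
       (forall b, lt b a -> exists g, c a g /\ le lt b g)) /\
    (forall C, club lt C ->
       ~ K (fun a => (E_cf lt th a /\ acc lt (E_cf_ge lt rh) a) /\ subset (c a) C)).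
Proof.
  destruct (choice (fun s X => cofinal_in lt X s /\
                     exists g, cof_eq lt s g /\ equinumerous X (seg lt g))) as [L HL].
  { intro s. destruct (cof_exists s) as [g Hg]. destruct (proj1 Hg) as [X [HX HXg]].
    exists X. split; [exact HX|]. now exists g. }
  apply NNPP; intro Hnone.
  destruct (choice (fun C D => club lt D /\
    K (fun a => (E_cf lt th a /\ acc lt (E_cf_ge lt rh) a) /\ subset (ladder L C a) D))) as [D HD].
  { intro C. apply NNPP; intro HC. apply Hnone. exists (ladder L C). split.
    - intros a Ha Hacc. exact (ladder_cofinal L C a (fun s => proj1 (HL s)) Ha Hacc).
    - intros D' HD' HKD'. apply HC. now exists D'. }
  set (Ystar := cof_ge_part (club_chain D rh)).
  apply (ideal_club_positive th K (acc lt Ystar)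
           (fun a => exists i, lt i rh /\ (E_cf lt th a /\ acc lt (E_cf_ge lt rh) a) /\
                               subset (ladder L (club_chain D i) a) (D (club_chain D i))) HK HNS).
  - apply acc_club, club_cof_ge_unbounded, club_chain_club. intro C. apply HD.
  - intros a Ha Hacc.
    destruct (ladder_eventually_in_failure_club L HL D (fun C => proj1 (HD C)) a Ha Hacc)
      as [i [Hi Hsub]].
    exists i. split; [exact Hi|]. split; [|exact Hsub]. split; [exact Ha|].
    revert Hacc. apply acc_mono. now intros x [_ Hx].
  - apply HKc. intros i _. apply HD.
Qed.

End Ladders.

End RegularCardinal.
End RegularKappa.
End WellOrder.

Theorem proposition5p3 (T : Type) (lt : T -> T -> Prop)
  (Hwo : strict_well_order lt) (Hkappa : regular_uncountable_kappa lt)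
  (th rh : T) (Hth : infinite_regular lt th) (Hrh : infinite_regular lt rh)
  (Hthrh : lt th rh)
  (K : (T -> Prop) -> Prop) (HK : ideal lt K) (HKc : kappa_complete lt K)
  (HNS : NS_restr_sub lt th K) :
  exists c : T -> T -> Prop,
    (forall a, E_cf lt th a -> acc lt (E_cf_ge lt rh) a ->
       subset (c a) (fun g => E_cf_ge lt rh g /\ lt g a) /\
       (forall b, lt b a -> exists g, c a g /\ le lt b g)) /\
    (forall C, club lt C ->
       ~ K (fun a => (E_cf lt th a /\ acc lt (E_cf_ge lt rh) a) /\ subset (c a) C)).
Proof. exact (ladder_system_exists T lt Hwo Hkappa rh Hrh th Hthrh K HK HKc HNS). Qed.
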